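(* Let $e=(B,T)$ be an edge with disjoint nonempty $T,B\subseteq[d]$, $m=|T|$, $r=|T|+|B|$, and let $\theta\in\mathbb{R}^d$ satisfy $|\theta_i|\le b$ for all $i$. Then $$\sum_{i\in T\cup B}\Big(\frac{\partial\log\mathbb{P}_\theta(e)}{\partial\theta_i}\Big)^2\ \le\ 2\,m\,e^{2b}\Big(\frac{r}{r-m}\Big)^2,$$ and $\partial\log\mathbb{P}_\theta(e)/\partial\theta_i=0$ for $i\notin T\cup B$.
   Context: PL model: items $[d]$, parameter $\theta\in\mathbb{R}^d$. For disjoint nonempty $T,B\subseteq[d]$, $\mathbb{P}_\theta(e)=\mathbb{P}_\theta(B\prec T)=\sum_{\sigma}\prod_{u=1}^{|T|}\frac{e^{\theta_{\sigma(u)}}}{\sum_{c=u}^{|T|}e^{\theta_{\sigma(c)}}+\sum_{i\in B}e^{\theta_i}}$, the sum over all orderings $\sigma=(\sigma(1),\dots,\sigma(|T|))$ of $T$; this is the PL probability that all items of $T$ are ranked above all items of $B$ when $T\cup B$ is offered. *)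

From Stdlib Require Import Reals Lra List.
Import ListNotations.
Open Scope R_scope.

Fixpoint inserts (x : nat) (l : list nat) : list (list nat) :=
  match l with
  | [] => [[x]]
  | y :: l' => (x :: y :: l') :: map (cons y) (inserts x l')
  end.

(* All orderings of a list (for a duplicate-free list: each permutation once). *)
Fixpoint perms (l : list nat) : list (list nat) :=
  match l with
  | [] => [[]]
  | x :: l' => flat_map (inserts x) (perms l')
  end.

Definition sum_exp (theta : nat -> R) (l : list nat) : R :=
  fold_right (fun i acc => exp (theta i) + acc) 0 l.

Fixpoint pl_term (theta : nat -> R) (SB : R) (sigma : list nat) : R :=
  match sigma with
  | [] => 1
  | s :: sigma' => exp (theta s) / (sum_exp theta (s :: sigma') + SB)
                   * pl_term theta SB sigma'
  end.

(* P_theta(B < T): sum over all orderings sigma of T *)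
Definition PL_prob (theta : nat -> R) (T B : list nat) : R :=
  fold_right (fun sigma acc => pl_term theta (sum_exp theta B) sigma + acc) 0
             (perms T).

Definition upd (theta : nat -> R) (i : nat) (t : R) : nat -> R :=
  fun j => if Nat.eqb j i then t else theta j.

Definition sum_list (f : nat -> R) (l : list nat) : R :=
  fold_right (fun i acc => f i + acc) 0 l.

From Stdlib Require Import Reals Lra List Permutation FunctionalExtensionality.
Import ListNotations.
Open Scope R_scope.

(* The partial derivative of log P in theta_i is the P-weighted average, over the orderings
   sigma of T, of the derivative of the log of the sigma-term:
     occ_i(sigma) - sum_u e^{theta_i} [i in sigma_{>=u} or B] / S_u,
   where S_u is the u-th denominator.  Every S_u is at least S_B = sum_{j in B} e^{theta_j}, so
   the second sum (the hazard of i) lies in [0, m e^{theta_i} / S_B]; and summed over i in T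
   the hazards of one ordering are at most m, since each S_u dominates the numerators it
   collects.  Hence for i in B the derivative is minus an averaged hazard, with square at most
   (m e^b / S_B) (m e^{theta_i} / S_B), and for i in T it is 1 - Y_i with Y_i an averaged
   hazard, whose square is at most 1 + (m e^b / S_B) Y_i.  Summing and using
   S_B >= |B| e^{-b} gives m + 2 m^2 e^{2b} / |B|, below the claimed bound. *)

Definition lsum {A : Type} (f : A -> R) (l : list A) : R :=
  fold_right (fun x acc => f x + acc) 0 l.

Section ListSums.
Context {A : Type}.
Implicit Types (f g : A -> R) (l : list A).

Lemma lsum_nil f : lsum f [] = 0.
Proof. reflexivity. Qed.

Lemma lsum_cons f x l : lsum f (x :: l) = f x + lsum f l.
Proof. reflexivity. Qed.

Lemma lsum_app f l1 l2 : lsum f (l1 ++ l2) = lsum f l1 + lsum f l2.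
Proof.
  induction l1 as [|x l1 IH]; simpl app; rewrite ?lsum_nil, ?lsum_cons; [ring|].
  rewrite IH; ring.
Qed.

Lemma lsum_le f g l : (forall x, In x l -> f x <= g x) -> lsum f l <= lsum g l.
Proof.
  induction l as [|x l IH]; intros H; rewrite ?lsum_nil, ?lsum_cons; [lra|].
  apply Rplus_le_compat; [apply H; left | apply IH; intros; apply H; right]; auto.
Qed.

Lemma lsum_ext f g l : (forall x, In x l -> f x = g x) -> lsum f l = lsum g l.
Proof. intros H; apply Rle_antisym; apply lsum_le; intros x Hx; rewrite H; auto; lra. Qed.

Lemma lsum_mult_l c f l : lsum (fun x => c * f x) l = c * lsum f l.
Proof. induction l as [|x l IH]; rewrite ?lsum_nil, ?lsum_cons, ?IH; ring. Qed.

Lemma lsum_plus f g l : lsum (fun x => f x + g x) l = lsum f l + lsum g l.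
Proof. induction l as [|x l IH]; rewrite ?lsum_nil, ?lsum_cons, ?IH; ring. Qed.

Lemma lsum_const c l : lsum (fun _ => c) l = INR (length l) * c.
Proof.
  induction l as [|x l IH]; rewrite ?lsum_nil, ?lsum_cons, ?IH; simpl length; [simpl; ring|].
  rewrite S_INR; ring.
Qed.

Lemma lsum_nonneg f l : (forall x, In x l -> 0 <= f x) -> 0 <= lsum f l.
Proof.
  intros H; rewrite <- (Rmult_0_r (INR (length l))), <- lsum_const. apply lsum_le, H.
Qed.

Lemma lsum_pos f l : (forall x, In x l -> 0 < f x) -> l <> [] -> 0 < lsum f l.
Proof.
  induction l as [|x l IH]; intros H Hne; [congruence|]. rewrite lsum_cons.
  assert (0 < f x) by (apply H; left; auto).
  destruct l as [|y l]; [rewrite lsum_nil; lra|].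
  enough (0 < lsum f (y :: l)) by lra.
  apply IH; [intros; apply H; right; auto | congruence].
Qed.

End ListSums.

Lemma lsum_comm {I A : Type} (F : I -> A -> R) (J : list I) (l : list A) :
  lsum (fun j => lsum (F j) l) J = lsum (fun x => lsum (fun j => F j x) J) l.
Proof.
  induction J as [|j J IH]; rewrite ?lsum_nil, ?lsum_cons.
  - induction l as [|x l IHl]; [reflexivity|].
    rewrite lsum_cons, <- IHl; cbv beta; rewrite lsum_nil; ring.
  - rewrite IH, <- lsum_plus. apply lsum_ext; intros; rewrite lsum_cons; ring.
Qed.

Section WeightedAverage.
Context {A : Type} (p : A -> R) (L : list A).

Definition wavg (f : A -> R) : R := lsum (fun x => p x * f x) L / lsum p L.

Lemma wavg_ext f g : (forall x, In x L -> f x = g x) -> wavg f = wavg g.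
Proof.
  intros H; unfold wavg; f_equal; apply lsum_ext; intros x Hx; rewrite H; auto.
Qed.

Lemma wavg_lsum {I : Type} (F : I -> A -> R) (J : list I) :
  lsum (fun j => wavg (F j)) J = wavg (fun x => lsum (fun j => F j x) J).
Proof.
  unfold wavg, Rdiv.
  rewrite (lsum_ext _ (fun j => / lsum p L * lsum (fun x => p x * F j x) L)) by (intros; ring).
  rewrite lsum_mult_l, lsum_comm, Rmult_comm. f_equal.
  apply lsum_ext; intros; rewrite lsum_mult_l; reflexivity.
Qed.

Hypotheses (p_pos : forall x, In x L -> 0 < p x) (L_ne : L <> []).

Lemma wavg_bounds lo hi f : (forall x, In x L -> lo <= f x <= hi) -> lo <= wavg f <= hi.
Proof.
  intros Hf. pose proof (lsum_pos p L p_pos L_ne) as HP. unfold wavg.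
  assert (lo * lsum p L <= lsum (fun x => p x * f x) L <= hi * lsum p L).
  { rewrite <- !lsum_mult_l. split; apply lsum_le; intros x Hx;
      specialize (p_pos x Hx); specialize (Hf x Hx); nra. }
  split; [apply Rmult_le_reg_r with (lsum p L) | apply Rmult_le_reg_r with (lsum p L)];
    auto; field_simplify; lra.
Qed.

Lemma wavg_const_sub c f : wavg (fun x => c - f x) = c - wavg f.
Proof.
  pose proof (lsum_pos p L p_pos L_ne) as HP. unfold wavg.
  rewrite (lsum_ext _ (fun x => c * p x + -1 * (p x * f x))) by (intros; ring).
  rewrite lsum_plus, !lsum_mult_l. field; lra.
Qed.

End WeightedAverage.

Lemma inserts_perm x l l' : In l' (inserts x l) -> Permutation (x :: l) l'.
Proof.
  revert l'; induction l as [|y l IH]; simpl; intros l' H.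
  - destruct H as [<-|[]]; auto.
  - destruct H as [<-|H]; auto.
    apply in_map_iff in H as [l'' [<- H]].
    eapply perm_trans; [apply perm_swap|]. apply perm_skip; auto.
Qed.

Lemma perms_perm l s : In s (perms l) -> Permutation l s.
Proof.
  revert s; induction l as [|x l IH]; simpl; intros s H.
  - destruct H as [<-|[]]; auto.
  - apply in_flat_map in H as [l' [H1 H2]].
    eapply perm_trans; [apply perm_skip, IH, H1 | apply inserts_perm, H2].
Qed.

Lemma in_perms_self l : In l (perms l).
Proof.
  induction l as [|x l IH]; simpl; [auto|].
  apply in_flat_map; exists l; split; auto. destruct l; simpl; auto.
Qed.

Lemma perms_neq_nil l : perms l <> [].
Proof. intros E; pose proof (in_perms_self l) as H; rewrite E in H; destruct H. Qed.

Lemma sum_exp_pos th l : l <> [] -> 0 < sum_exp th l.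
Proof. intros; apply (lsum_pos (fun i => exp (th i))); auto; intros; apply exp_pos. Qed.

Lemma sum_exp_nonneg th l : 0 <= sum_exp th l.
Proof. destruct l as [|i l]; [simpl; lra|]. left; apply sum_exp_pos; congruence. Qed.

Lemma sum_exp_ge th l c : (forall i, In i l -> c <= exp (th i)) -> INR (length l) * c <= sum_exp th l.
Proof. intros; rewrite <- lsum_const; apply lsum_le; auto. Qed.

Lemma pl_term_pos th SB s : 0 <= SB -> 0 < pl_term th SB s.
Proof.
  intros HSB; induction s as [|x s IH]; cbn [pl_term]; [lra|].
  apply Rmult_lt_0_compat; auto. apply Rdiv_lt_0_compat; [apply exp_pos|].
  pose proof (sum_exp_pos th (x :: s) ltac:(congruence)); lra.
Qed.

Definition occ (i : nat) (l : list nat) : R := INR (count_occ Nat.eq_dec l i).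

Lemma occ_nonneg i l : 0 <= occ i l.
Proof. apply pos_INR. Qed.

Lemma occ_cons i x l : occ i (x :: l) = occ i [x] + occ i l.
Proof. unfold occ; simpl; destruct (Nat.eq_dec x i); rewrite ?S_INR; simpl; ring. Qed.

Lemma occ_app i l1 l2 : occ i (l1 ++ l2) = occ i l1 + occ i l2.
Proof. unfold occ; rewrite count_occ_app, plus_INR; reflexivity. Qed.

Lemma occ_single_exp th i x : occ i [x] * exp (th x) = occ i [x] * exp (th i).
Proof. unfold occ; simpl; destruct (Nat.eq_dec x i) as [->|]; simpl; ring. Qed.

Lemma occ_notin i l : ~ In i l -> occ i l = 0.
Proof. intros H; unfold occ; rewrite (proj1 (count_occ_not_In _ _ _) H); reflexivity. Qed.

Lemma occ_in i l : NoDup l -> In i l -> occ i l = 1.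
Proof. intros Hl Hi; unfold occ; rewrite (proj1 (NoDup_count_occ' _ _) Hl i Hi); reflexivity. Qed.

Lemma occ_le_1 i l : NoDup l -> occ i l <= 1.
Proof. intros Hl; unfold occ; apply (le_INR _ 1), NoDup_count_occ, Hl. Qed.

Lemma lsum_occ_single x T : lsum (fun j => occ j [x]) T = occ x T.
Proof.
  induction T as [|j T IH]; [reflexivity|].
  rewrite lsum_cons, IH, (occ_cons x j). unfold occ; simpl.
  destruct (Nat.eq_dec x j), (Nat.eq_dec j x); simpl; congruence || ring.
Qed.

(* [pl_term th SB s] is a product of factors e^{th s_u} / S_u; [occ i s] and [hazard th B i s]
   are the derivatives in [th i] of the sums of the logarithms of the numerators and of the
   denominators S_u respectively. *)
Fixpoint hazard (th : nat -> R) (B : list nat) (i : nat) (s : list nat) : R :=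
  match s with
  | [] => 0
  | x :: s' => occ i (x :: s' ++ B) * exp (th i) / (sum_exp th (x :: s') + sum_exp th B)
               + hazard th B i s'
  end.

Definition dlog_pl_term (th : nat -> R) (B : list nat) (i : nat) (s : list nat) : R :=
  occ i s - hazard th B i s.

Definition dlog_PL (th : nat -> R) (T B : list nat) (i : nat) : R :=
  wavg (pl_term th (sum_exp th B)) (perms T) (dlog_pl_term th B i).

Lemma upd_same th i : upd th i (th i) = th.
Proof.
  apply functional_extensionality; intros j; unfold upd.
  destruct (Nat.eqb_spec j i) as [->|]; reflexivity.
Qed.

Lemma derivable_pt_lim_eq_r f x l l' : derivable_pt_lim f x l -> l = l' -> derivable_pt_lim f x l'.
Proof. now intros ? <-. Qed.

Lemma derivable_pt_lim_lsum {A : Type} (F : R -> A -> R) (F' : A -> R) x L :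
  (forall a, In a L -> derivable_pt_lim (fun t => F t a) x (F' a)) ->
  derivable_pt_lim (fun t => lsum (F t) L) x (lsum F' L).
Proof.
  induction L as [|a L IH]; intros H; [apply derivable_pt_lim_const|].
  apply (derivable_pt_lim_plus (fun t => F t a) (fun t => lsum (F t) L));
    [apply H; left | apply IH; intros; apply H; right]; auto.
Qed.

Lemma derivable_pt_lim_exp_upd th i x :
  derivable_pt_lim (fun t => exp (upd th i t x)) (th i) (occ i [x] * exp (th x)).
Proof.
  unfold upd, occ; simpl. destruct (Nat.eqb_spec x i) as [->|Hx].
  - destruct (Nat.eq_dec i i); [|congruence]. rewrite Rmult_1_l. apply derivable_pt_lim_exp.
  - destruct (Nat.eq_dec x i); [congruence|]. rewrite Rmult_0_l. apply derivable_pt_lim_const.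
Qed.

Lemma derivable_pt_lim_sum_exp_upd th i l :
  derivable_pt_lim (fun t => sum_exp (upd th i t) l) (th i) (occ i l * exp (th i)).
Proof.
  change (fun t => sum_exp (upd th i t) l) with (fun t => lsum (fun j => exp (upd th i t j)) l).
  eapply derivable_pt_lim_eq_r.
  - apply (derivable_pt_lim_lsum (fun t j => exp (upd th i t j))); intros.
    apply derivable_pt_lim_exp_upd.
  - induction l as [|x l IH]; [unfold occ; simpl; ring|].
    rewrite lsum_cons, IH, occ_single_exp, (occ_cons i x l); ring.
Qed.

Lemma derivable_pt_lim_pl_term th B i s :
  derivable_pt_lim (fun t => pl_term (upd th i t) (sum_exp (upd th i t) B) s) (th i)
    (pl_term th (sum_exp th B) s * dlog_pl_term th B i s).
Proof.
  induction s as [|x s IH].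
  - eapply derivable_pt_lim_eq_r; [apply derivable_pt_lim_const|].
    unfold dlog_pl_term, occ; simpl; ring.
  - set (D := fun t => sum_exp (upd th i t) (x :: s) + sum_exp (upd th i t) B).
    assert (HD : D (th i) <> 0).
    { unfold D; rewrite upd_same.
      pose proof (sum_exp_pos th (x :: s) ltac:(congruence)); pose proof (sum_exp_nonneg th B); lra. }
    eapply derivable_pt_lim_eq_r.
    + apply (derivable_pt_lim_mult (fun t => exp (upd th i t x) / D t)
        (fun t => pl_term (upd th i t) (sum_exp (upd th i t) B) s)); [|exact IH].
      apply (derivable_pt_lim_div (fun t => exp (upd th i t x)) D); [| |exact HD].
      * apply derivable_pt_lim_exp_upd.
      * apply (derivable_pt_lim_plus (fun t => sum_exp (upd th i t) (x :: s)));
          apply derivable_pt_lim_sum_exp_upd.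
    + unfold D in *; cbv beta; rewrite upd_same in *.
      unfold dlog_pl_term; cbn [pl_term hazard].
      rewrite (occ_cons i x (s ++ B)), (occ_cons i x s), occ_app.
      unfold Rsqr; field; exact HD.
Qed.

Lemma PL_prob_pos th T B : 0 < PL_prob th T B.
Proof.
  apply (lsum_pos (pl_term th (sum_exp th B))); [|apply perms_neq_nil].
  intros; apply pl_term_pos, sum_exp_nonneg.
Qed.

Lemma derivable_pt_lim_ln_PL th T B i :
  derivable_pt_lim (fun t => ln (PL_prob (upd th i t) T B)) (th i) (dlog_PL th T B i).
Proof.
  assert (H := derivable_pt_lim_lsum
    (fun t => pl_term (upd th i t) (sum_exp (upd th i t) B))
    (fun s => pl_term th (sum_exp th B) s * dlog_pl_term th B i s) (th i) (perms T)
    (fun s _ => derivable_pt_lim_pl_term th B i s)).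
  eapply derivable_pt_lim_eq_r.
  - apply (derivable_pt_lim_comp _ ln _ _ (/ PL_prob th T B) H).
    cbv beta; rewrite upd_same. exact (derivable_pt_lim_ln _ (PL_prob_pos th T B)).
  - change (PL_prob th T B) with (lsum (pl_term th (sum_exp th B)) (perms T)).
    unfold dlog_PL, wavg, Rdiv; ring.
Qed.

Lemma hazard_nonneg th B i s : 0 <= hazard th B i s.
Proof.
  induction s as [|x s IH]; cbn [hazard]; [lra|].
  pose proof (occ_nonneg i (x :: s ++ B)).
  pose proof (exp_pos (th i)); pose proof (sum_exp_pos th (x :: s) ltac:(congruence)).
  pose proof (sum_exp_nonneg th B).
  enough (0 <= occ i (x :: s ++ B) * exp (th i) / (sum_exp th (x :: s) + sum_exp th B)) by lra.
  unfold Rdiv; apply Rmult_le_pos; [apply Rmult_le_pos | left; apply Rinv_0_lt_compat]; lra.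
Qed.

Lemma hazard_le th B i s : B <> [] -> NoDup (s ++ B) ->
  hazard th B i s <= INR (length s) * exp (th i) / sum_exp th B.
Proof.
  intros HB; pose proof (sum_exp_pos th B HB) as HSB; pose proof (exp_pos (th i)).
  induction s as [|x s IH]; intros Hnd; cbn [hazard length]; [unfold Rdiv; simpl; lra|].
  cbn [app] in Hnd; apply NoDup_cons_iff in Hnd as Hnd'; destruct Hnd' as [_ Hnd'].
  pose proof (occ_le_1 i _ Hnd); pose proof (occ_nonneg i (x :: s ++ B)).
  pose proof (sum_exp_nonneg th (x :: s)).
  assert (occ i (x :: s ++ B) * exp (th i) / (sum_exp th (x :: s) + sum_exp th B)
          <= exp (th i) / sum_exp th B).
  { unfold Rdiv. apply Rmult_le_compat; [apply Rmult_le_pos; lra|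
      left; apply Rinv_0_lt_compat; lra | nra | apply Rinv_le_contravar; lra]. }
  rewrite S_INR. specialize (IH Hnd'). unfold Rdiv in *. lra.
Qed.

Lemma hazard_notin th B i s : ~ In i s -> ~ In i B -> hazard th B i s = 0.
Proof.
  intros Hs HB; induction s as [|x s IH]; cbn [hazard]; [reflexivity|].
  rewrite occ_notin, IH; [unfold Rdiv; ring | |].
  - intro; apply Hs; right; auto.
  - rewrite app_comm_cons; intros [?|?]%in_app_or; auto.
Qed.

Lemma lsum_occ_exp_le th T L : NoDup T ->
  lsum (fun j => occ j L * exp (th j)) T <= sum_exp th L.
Proof.
  intros HT; induction L as [|x L IH].
  - rewrite (lsum_ext _ (fun _ => 0)), lsum_const; [simpl; lra|].
    intros; unfold occ; simpl; ring.
  - rewrite (lsum_ext _ (fun j => exp (th x) * occ j [x] + occ j L * exp (th j))).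
    + rewrite lsum_plus, lsum_mult_l, lsum_occ_single.
      change (sum_exp th (x :: L)) with (exp (th x) + sum_exp th L).
      pose proof (occ_le_1 x T HT); pose proof (exp_pos (th x)). nra.
    + intros j _. rewrite (occ_cons j x L), Rmult_plus_distr_r, <- (occ_single_exp th j x). ring.
Qed.

Lemma lsum_hazard_le th B T s : NoDup T ->
  lsum (fun j => hazard th B j s) T <= INR (length s).
Proof.
  intros HT; induction s as [|x s IH].
  - rewrite (lsum_ext _ (fun _ => 0)), lsum_const by reflexivity. simpl; lra.
  - set (D := sum_exp th (x :: s) + sum_exp th B).
    assert (HD : 0 < D).
    { pose proof (sum_exp_pos th (x :: s) ltac:(congruence)); pose proof (sum_exp_nonneg th B).
      unfold D; lra. }
    cbn [hazard]; fold D. rewrite lsum_plus.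
    rewrite (lsum_ext _ (fun j => / D * (occ j (x :: s ++ B) * exp (th j))))
      by (intros; unfold Rdiv; ring).
    rewrite lsum_mult_l, length_cons, S_INR.
    pose proof (lsum_occ_exp_le th T (x :: s ++ B) HT) as Hocc.
    change (sum_exp th (x :: s ++ B)) with (lsum (fun j => exp (th j)) ((x :: s) ++ B)) in Hocc.
    rewrite lsum_app in Hocc. change (lsum _ (x :: s) + lsum _ B) with D in Hocc.
    assert (/ D * lsum (fun j => occ j (x :: s ++ B) * exp (th j)) T <= 1).
    { apply Rmult_le_reg_l with D; auto. rewrite <- Rmult_assoc, Rinv_r; lra. }
    lra.
Qed.

Lemma PL_bound_arith M K E X : 0 <= M -> 0 < K -> 1 <= E -> 0 <= X <= E / K ->
  M + 2 * M ^ 2 * X <= 2 * M * E * ((M + K) / K) ^ 2.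
Proof.
  intros HM HK HE HX.
  set (u := M / K).
  assert (Hu : 0 <= u) by (unfold u, Rdiv; apply Rmult_le_pos; [|left; apply Rinv_0_lt_compat]; lra).
  assert (HMX : M * X <= u * E).
  { unfold u; replace (M / K * E) with (M * (E / K)) by (field; lra). apply Rmult_le_compat_l; lra. }
  replace ((M + K) / K) with (1 + u) by (unfold u; field; lra).
  assert (M * (M * X) <= M * (u * E)) by (apply Rmult_le_compat_l; lra).
  assert (0 <= M * E * u) by (apply Rmult_le_pos; [apply Rmult_le_pos|]; lra).
  assert (0 <= M * E * u * u) by (apply Rmult_le_pos; lra).
  nra.
Qed.

Section ScoreBounds.
Variables (th : nat -> R) (T B : list nat).
Hypotheses (T_nodup : NoDup T) (B_nodup : NoDup B) (B_ne : B <> [])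
  (TB_disj : forall i, In i T -> ~ In i B).

Local Notation avg := (wavg (pl_term th (sum_exp th B)) (perms T)).
Local Notation m := (INR (length T)).
Local Notation SB := (sum_exp th B).

Lemma avg_bounds lo hi f :
  (forall s, In s (perms T) -> lo <= f s <= hi) -> lo <= avg f <= hi.
Proof.
  apply wavg_bounds; [|apply perms_neq_nil].
  intros; apply pl_term_pos, sum_exp_nonneg.
Qed.

Lemma perms_nodup_app s : In s (perms T) -> NoDup (s ++ B).
Proof.
  intros Hs; apply (Permutation_NoDup (Permutation_app_tail B (perms_perm T s Hs))).
  apply NoDup_app; auto.
Qed.

Lemma avg_hazard_bounds i : 0 <= avg (hazard th B i) <= m * exp (th i) / SB.
Proof.
  apply avg_bounds; intros s Hs; split; [apply hazard_nonneg|].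
  rewrite (Permutation_length (perms_perm T s Hs)).
  apply hazard_le; [exact B_ne | apply perms_nodup_app, Hs].
Qed.

Lemma lsum_avg_hazard_le : lsum (fun i => avg (hazard th B i)) T <= m.
Proof.
  rewrite (wavg_lsum _ _ (fun i => hazard th B i)).
  apply avg_bounds with (lo := 0); intros s Hs; split.
  - apply lsum_nonneg; intros; apply hazard_nonneg.
  - rewrite (Permutation_length (perms_perm T s Hs)). apply lsum_hazard_le, T_nodup.
Qed.

Lemma dlog_PL_in_B i : In i B -> - (m * exp (th i) / SB) <= dlog_PL th T B i <= 0.
Proof.
  intros HiB; apply avg_bounds; intros s Hs. unfold dlog_pl_term.
  rewrite occ_notin.
  - rewrite (Permutation_length (perms_perm T s Hs)).
    pose proof (hazard_nonneg th B i s).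
    pose proof (hazard_le th B i s B_ne (perms_nodup_app s Hs)). lra.
  - intros His; apply (TB_disj i); auto.
    apply (Permutation_in i (Permutation_sym (perms_perm T s Hs)) His).
Qed.

Lemma dlog_PL_in_T i : In i T -> dlog_PL th T B i = 1 - avg (hazard th B i).
Proof.
  intros HiT; unfold dlog_PL.
  rewrite <- wavg_const_sub; [|intros; apply pl_term_pos, sum_exp_nonneg | apply perms_neq_nil].
  apply wavg_ext; intros s Hs; unfold dlog_pl_term.
  rewrite occ_in; [reflexivity | |].
  - exact (Permutation_NoDup (perms_perm T s Hs) T_nodup).
  - exact (Permutation_in i (perms_perm T s Hs) HiT).
Qed.

Lemma dlog_PL_notin i : ~ In i T -> ~ In i B -> dlog_PL th T B i = 0.
Proof.
  intros HiT HiB; enough (0 <= dlog_PL th T B i <= 0) by lra.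
  apply avg_bounds; intros s Hs; unfold dlog_pl_term.
  assert (His : ~ In i s)
    by (intros H; apply HiT, (Permutation_in i (Permutation_sym (perms_perm T s Hs)) H)).
  rewrite occ_notin, hazard_notin; auto; lra.
Qed.

Lemma lsum_dlog_PL_sq_B eb : (forall i, In i B -> exp (th i) <= eb) ->
  lsum (fun i => dlog_PL th T B i ^ 2) B <= m ^ 2 * eb / SB.
Proof.
  intros Heb. pose proof (sum_exp_pos th B B_ne). pose proof (pos_INR (length T)).
  apply Rle_trans with (lsum (fun i => m * eb / SB * (m / SB * exp (th i))) B).
  - apply lsum_le; intros i Hi. pose proof (dlog_PL_in_B i Hi) as Hd.
    assert (m * exp (th i) / SB <= m * eb / SB).
    { unfold Rdiv; apply Rmult_le_compat_r; [left; apply Rinv_0_lt_compat; lra|].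
      apply Rmult_le_compat_l; auto. }
    replace (m / SB * exp (th i)) with (m * exp (th i) / SB) by (field; lra). nra.
  - rewrite !lsum_mult_l. change (lsum (fun i => exp (th i)) B) with SB. right; field; lra.
Qed.

Lemma lsum_dlog_PL_sq_T eb : (forall i, In i T -> exp (th i) <= eb) ->
  lsum (fun i => dlog_PL th T B i ^ 2) T <= m + m ^ 2 * eb / SB.
Proof.
  intros Heb. pose proof (sum_exp_pos th B B_ne). pose proof (pos_INR (length T)).
  assert (Hc : 0 <= m * eb / SB).
  { destruct T as [|t T']; [simpl; unfold Rdiv; lra|].
    pose proof (exp_pos (th t)); pose proof (Heb t (or_introl eq_refl)).
    unfold Rdiv; apply Rmult_le_pos; [apply Rmult_le_pos|left; apply Rinv_0_lt_compat]; lra. }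
  apply Rle_trans with (lsum (fun i => 1 + m * eb / SB * avg (hazard th B i)) T).
  - apply lsum_le; intros i Hi. rewrite dlog_PL_in_T by exact Hi.
    pose proof (avg_hazard_bounds i) as HY.
    assert (m * exp (th i) / SB <= m * eb / SB).
    { unfold Rdiv; apply Rmult_le_compat_r; [left; apply Rinv_0_lt_compat; lra|].
      apply Rmult_le_compat_l; auto. }
    nra.
  - rewrite lsum_plus, lsum_const, lsum_mult_l.
    pose proof Rmult_le_compat_l _ _ _ Hc lsum_avg_hazard_le.
    replace (m ^ 2 * eb / SB) with (m * eb / SB * m) by (field; lra). lra.
Qed.

Lemma lsum_dlog_PL_sq_le eb : 1 <= eb -> (forall i, In i (T ++ B) -> / eb <= exp (th i) <= eb) ->
  lsum (fun i => dlog_PL th T B i ^ 2) (T ++ B)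
    <= 2 * m * (eb * eb) * ((m + INR (length B)) / INR (length B)) ^ 2.
Proof.
  intros Heb Hw.
  pose proof (lsum_dlog_PL_sq_T eb (fun i Hi => proj2 (Hw i (in_or_app _ _ _ (or_introl Hi))))).
  pose proof (lsum_dlog_PL_sq_B eb (fun i Hi => proj2 (Hw i (in_or_app _ _ _ (or_intror Hi))))).
  pose proof (sum_exp_ge th B _ (fun i Hi => proj1 (Hw i (in_or_app _ _ _ (or_intror Hi))))) as HSB.
  pose proof (sum_exp_pos th B B_ne).
  set (k := INR (length B)) in *.
  assert (Hk : 1 <= k).
  { unfold k; destruct B as [|i B']; [congruence|]. rewrite length_cons, S_INR.
    pose proof (pos_INR (length B')); lra. }
  assert (HX : eb / SB <= eb * eb / k).
  { apply Rle_trans with (eb / (k * / eb)).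
    - unfold Rdiv; apply Rmult_le_compat_l; [lra|].
      apply Rinv_le_contravar; [apply Rmult_lt_0_compat; [lra|apply Rinv_0_lt_compat]|]; lra.
    - right; field; lra. }
  assert (0 <= eb / SB) by (unfold Rdiv; apply Rmult_le_pos; [|left; apply Rinv_0_lt_compat]; lra).
  pose proof (PL_bound_arith m k (eb * eb) (eb / SB) (pos_INR _) ltac:(lra) ltac:(nra)
    ltac:(split; assumption)).
  rewrite lsum_app; unfold Rdiv in *; lra.
Qed.

End ScoreBounds.

Lemma exp_le_exp x y : x <= y -> exp x <= exp y.
Proof. intros [H| ->]; [left; apply exp_increasing, H | right; reflexivity]. Qed.

Lemma exp_bounds_of_Rabs x b : Rabs x <= b -> / exp b <= exp x <= exp b.
Proof.
  intros H; pose proof (Rle_abs x); pose proof (Rle_abs (- x)); rewrite Rabs_Ropp in *.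
  rewrite <- exp_Ropp; split; apply exp_le_exp; lra.
Qed.

Theorem mainTheorem9 (d : nat) (T B : list nat) (theta : nat -> R) (b : R)
  (hTnd : NoDup T) (hBnd : NoDup B)
  (hTne : T <> []) (hBne : B <> [])
  (hdisj : forall i, In i T -> ~ In i B)
  (hTd : forall i, In i T -> (i < d)%nat)
  (hBd : forall i, In i B -> (i < d)%nat)
  (hb : forall i, (i < d)%nat -> Rabs (theta i) <= b) :
  exists g : nat -> R,
    (forall i, (i < d)%nat ->
       derivable_pt_lim (fun t => ln (PL_prob (upd theta i t) T B)) (theta i) (g i)) /\
    sum_list (fun i => (g i) ^ 2) (T ++ B)
      <= 2 * INR (length T) * exp (2 * b)
         * (INR (length T + length B) / (INR (length T + length B) - INR (length T))) ^ 2 /\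
    (forall i, (i < d)%nat -> ~ In i T -> ~ In i B -> g i = 0).
Proof.
  exists (dlog_PL theta T B).
  split; [intros; apply derivable_pt_lim_ln_PL|].
  split; [|intros i _; apply dlog_PL_notin].
  assert (Hb0 : 0 <= b).
  { destruct B as [|i B']; [congruence|].
    pose proof (hb i (hBd i (or_introl eq_refl))); pose proof (Rabs_pos (theta i)); lra. }
  replace (INR (length T + length B) - INR (length T)) with (INR (length B))
    by (rewrite plus_INR; ring).
  rewrite plus_INR.
  replace (exp (2 * b)) with (exp b * exp b) by (rewrite <- exp_plus; f_equal; ring).
  apply lsum_dlog_PL_sq_le; auto.
  - rewrite <- exp_0; apply exp_le_exp, Hb0.
  - intros i Hi; apply exp_bounds_of_Rabs, hb.
    apply in_app_or in Hi as [Hi|Hi]; auto.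
Qed.
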